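(* For every integer $s\ge2$, $v^*_{RLP,2}=\tfrac12(\sqrt s+s)$.
   Context: Let $\Xi_2:=\{\xi\in\mathbb R^s:\|\xi-\tfrac12\mathbb 1_s\|_2\le\tfrac12\}$, where $\mathbb 1_s$ is the all-ones vector. Define $v^*_{RLP,2}$ as the infimum of $\sup_{\xi\in\Xi_2}y(\xi)_s$ over all maps $y:\Xi_2\to\mathbb R^s$ satisfying, for all $\xi\in\Xi_2$: $y(\xi)_1\ge\max\{\xi_1,1-\xi_1\}$ and $y(\xi)_i\ge\max\{\xi_i,1-\xi_i\}+y(\xi)_{i-1}$ for $i=2,\dots,s$. *)

From Stdlib Require Import Reals.
Open Scope R_scope.

(* Vectors of R^s are represented as functions nat -> R, with coordinates
   0..s-1 (0-based; paper coordinate i corresponds to index i-1) and all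
   coordinates >= s equal to 0. *)

Definition norm2 (s : nat) (v : nat -> R) : R :=
  sqrt (sum_f_R0 (fun i => (v i) ^ 2) (pred s)).

Definition Xi2 (s : nat) (xi : nat -> R) : Prop :=
  (forall i, (s <= i)%nat -> xi i = 0) /\
  norm2 s (fun i => xi i - 1/2) <= 1/2.

Definition feasible (s : nat) (y : (nat -> R) -> (nat -> R)) : Prop :=
  forall xi, Xi2 s xi ->
    y xi 0%nat >= Rmax (xi 0%nat) (1 - xi 0%nat) /\
    (forall i, (1 <= i)%nat -> (i < s)%nat ->
       y xi i >= Rmax (xi i) (1 - xi i) + y xi (pred i)).

Definition is_glb (E : R -> Prop) (m : R) : Prop :=
  (forall x, E x -> m <= x) /\ (forall b, (forall x, E x -> b <= x) -> b <= m).

(* The set of achievable (finite) objective values sup_{xi in Xi_2} y(xi)_s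
   over feasible y; feasible maps with unbounded objective contribute +oo,
   which does not affect the infimum. *)
Definition objective_values (s : nat) (v : R) : Prop :=
  exists y, feasible s y /\ is_lub (fun t => exists xi, Xi2 s xi /\ t = y xi (pred s)) v.

Definition v_RLP2_is (s : nat) (m : R) : Prop := is_glb (objective_values s) m.

(* The constraints force y(xi)_i to dominate the partial sums of
   max(xi_j, 1 - xi_j) = 1/2 + |xi_j - 1/2|, and these partial sums are
   themselves feasible, so the optimal value is the maximum over the ball
   Xi_2 of s/2 + ||xi - 1/2||_1.  On a Euclidean ball of radius 1/2 the
   l1-norm is at most sqrt(s)/2, with equality at the point whose
   coordinates all equal 1/2 + 1/(2 sqrt s). *)

From Stdlib Require Import Reals Lra Lia Psatz.
Open Scope R_scope.

Lemma Rmax_compl_half (x : R) : Rmax x (1 - x) = 1/2 + Rabs (x - 1/2).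
Proof.
  unfold Rmax; destruct (Rle_dec x (1 - x));
    [rewrite Rabs_left1 | rewrite Rabs_right]; lra.
Qed.

Lemma Rabs_le_inv_add_sq (t u : R) : 0 < t -> Rabs u <= 1 / (4 * t) + t * u ^ 2.
Proof.
  intros Ht; apply Rmult_le_reg_l with (4 * t); [lra|].
  replace (4 * t * (1 / (4 * t) + t * u ^ 2)) with (1 + (2 * t * u) ^ 2)
    by (field; lra).
  destruct (Rle_dec 0 u).
  - rewrite Rabs_right by lra. pose proof (pow2_ge_0 (2 * t * u - 1)). nra.
  - rewrite Rabs_left by lra. pose proof (pow2_ge_0 (2 * t * u + 1)). nra.
Qed.

Lemma sqrt_INR_S_pos (n : nat) : 0 < sqrt (INR (S n)).
Proof. apply sqrt_lt_R0, lt_0_INR; lia. Qed.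

(* The l1 / l2 comparison (Cauchy-Schwarz), obtained by summing
   [Rabs_le_inv_add_sq] with the weight t = sqrt(n+1) / (2 r). *)
Lemma sum_abs_le_sqrt_mul (u : nat -> R) (n : nat) (r : R) : 0 < r ->
  sqrt (sum_f_R0 (fun i => u i ^ 2) n) <= r ->
  sum_f_R0 (fun i => Rabs (u i)) n <= sqrt (INR (S n)) * r.
Proof.
  intros Hr Hnorm.
  pose proof (sqrt_INR_S_pos n) as Hq.
  pose proof (sqrt_sqrt (INR (S n)) (pos_INR _)) as Hqq.
  set (q := sqrt (INR (S n))) in *.
  set (S2 := sum_f_R0 (fun i => u i ^ 2) n) in *.
  set (t := q / (2 * r)).
  assert (Ht : 0 < t) by (apply Rdiv_lt_0_compat; lra).
  assert (HS2 : S2 <= r ^ 2).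
  { assert (0 <= S2) by (apply cond_pos_sum; intros; apply pow2_ge_0).
    rewrite <- (sqrt_sqrt S2) by lra. pose proof (sqrt_pos S2). nra. }
  apply Rle_trans with (sum_f_R0 (fun i => 1 / (4 * t) + u i ^ 2 * t) n).
  - apply sum_Rle; intros i _.
    rewrite (Rmult_comm (u i ^ 2)). apply Rabs_le_inv_add_sq, Ht.
  - rewrite plus_sum, sum_cte, <- scal_sum. fold S2.
    assert (S2 * t <= r ^ 2 * t) by (apply Rmult_le_compat_r; lra).
    replace (1 / (4 * t) * INR (S n)) with (q * r / 2)
      by (unfold t; rewrite <- Hqq; field; lra).
    replace (r ^ 2 * t) with (q * r / 2) in * by (unfold t; field; lra).
    lra.
Qed.

Definition partial_cost (xi : nat -> R) (i : nat) : R :=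
  sum_f_R0 (fun j => Rmax (xi j) (1 - xi j)) i.

Lemma feasible_partial_cost (s : nat) : feasible s partial_cost.
Proof.
  intros xi _; split.
  - unfold partial_cost; simpl; lra.
  - intros [|i] Hi _; [lia|]. unfold partial_cost; simpl; lra.
Qed.

Lemma partial_cost_le_feasible (s : nat) (y : (nat -> R) -> nat -> R) xi :
  feasible s y -> Xi2 s xi ->
  forall i, (i < s)%nat -> partial_cost xi i <= y xi i.
Proof.
  intros Hy Hxi; destruct (Hy xi Hxi) as [Hy0 HyS].
  induction i as [|i IH]; intros Hi.
  - unfold partial_cost; simpl; lra.
  - specialize (HyS (S i) ltac:(lia) Hi). specialize (IH ltac:(lia)).
    unfold partial_cost in *; simpl in *; lra.
Qed.

Lemma partial_cost_Xi2_le (n : nat) xi : Xi2 (S n) xi ->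
  partial_cost xi n <= (sqrt (INR (S n)) + INR (S n)) / 2.
Proof.
  intros [_ Hnorm].
  unfold partial_cost.
  rewrite (sum_eq _ (fun j => 1/2 + Rabs (xi j - 1/2)))
    by (intros; apply Rmax_compl_half).
  rewrite plus_sum, sum_cte.
  pose proof (sum_abs_le_sqrt_mul (fun j => xi j - 1/2) n (1/2) ltac:(lra) Hnorm).
  lra.
Qed.

Definition xi_star (n : nat) (i : nat) : R :=
  if (i <=? n)%nat then 1/2 + 1 / (2 * sqrt (INR (S n))) else 0.

Lemma Xi2_xi_star (n : nat) : Xi2 (S n) (xi_star n).
Proof.
  pose proof (sqrt_INR_S_pos n) as Hq.
  pose proof (sqrt_sqrt (INR (S n)) (pos_INR _)) as Hqq.
  set (q := sqrt (INR (S n))) in *.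
  split.
  - intros i Hi; unfold xi_star. destruct (Nat.leb_spec i n); [lia | reflexivity].
  - unfold norm2; simpl pred.
    rewrite (sum_eq _ (fun _ => (1 / (2 * q)) ^ 2)).
    2:{ intros i Hi; unfold xi_star.
        destruct (Nat.leb_spec i n); [fold q; f_equal; ring | lia]. }
    rewrite sum_cte.
    replace ((1 / (2 * q)) ^ 2 * INR (S n)) with ((1/2) * (1/2))
      by (rewrite <- Hqq; field; lra).
    rewrite sqrt_square; lra.
Qed.

Lemma partial_cost_xi_star (n : nat) :
  partial_cost (xi_star n) n = (sqrt (INR (S n)) + INR (S n)) / 2.
Proof.
  pose proof (sqrt_INR_S_pos n) as Hq.
  pose proof (sqrt_sqrt (INR (S n)) (pos_INR _)) as Hqq.
  set (q := sqrt (INR (S n))) in *.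
  unfold partial_cost.
  rewrite (sum_eq _ (fun _ => 1/2 + 1 / (2 * q))).
  2:{ intros i Hi; unfold xi_star.
      destruct (Nat.leb_spec i n) as [_ | ]; [| lia].
      rewrite Rmax_compl_half, Rabs_right; fold q; [ring|].
      apply Rle_ge, Rlt_le. replace (_ - _) with (1 / (2 * q)) by ring.
      apply Rdiv_lt_0_compat; lra. }
  rewrite sum_cte, <- Hqq. field. lra.
Qed.

Theorem lemma2 (s : nat) (hs : (2 <= s)%nat) :
  v_RLP2_is s ((sqrt (INR s) + INR s) / 2).
Proof.
  destruct s as [|n]; [lia|].
  rewrite <- partial_cost_xi_star.
  assert (Hstar : Xi2 (S n) (xi_star n)) by apply Xi2_xi_star.
  split.
  - intros v [y [Hy [Hv _]]].
    apply Rle_trans with (y (xi_star n) n).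
    + apply (partial_cost_le_feasible (S n)); auto.
    + apply Hv. exists (xi_star n); split; [exact Hstar | reflexivity].
  - intros b Hb; apply Hb.
    exists partial_cost; split; [apply feasible_partial_cost|].
    split.
    + intros x [xi [Hxi ->]].
      rewrite partial_cost_xi_star. apply partial_cost_Xi2_le, Hxi.
    + intros m Hm. apply Hm. exists (xi_star n); split; [exact Hstar | reflexivity].
Qed.
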